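(* Let $n\ge2$ and let $Z$ be the $n\times n$ Zielke matrix defined by $Z[i,j]=1$ if $1\le i\le n-1$ and $j>i$, $Z[n,1]=-1$, and all other entries $0$. Fix a blocking of $Z$ into $n_t$ diagonal blocks, each of size at least $2$, and let $0<\tau\le\tfrac12$. Apply the BEAM factorization with threshold $\tau$ to $Z$. Then the max-norm growth factor equals $$\max_{1\le k\le n_t}\frac{\|\widetilde A^{(k)}\|_{\max}}{\|Z\|_{\max}}=\tau^{1-n_t}.$$
   Context: BEAM factorization with threshold $\tau$ (block LU with additive modifications): set $\widetilde A^{(1)}=Z$. For $k=1,\dots,n_t$: compute an SVD $\widetilde A^{(k)}_{k,k}=U_k\Sigma_kV_k^T$; replace every singular value $\le\tau$ in $\Sigma_k$ by $\tau$, obtaining $\widetilde\Sigma_k$, and set $D_k=U_k\widetilde\Sigma_kV_k^T$ (the modified diagonal block, with factors $L_{kk}=U_k$, $R_{kk}=\widetilde\Sigma_kV_k^T$); then form $\widetilde A^{(k+1)}=\widetilde A^{(k)}_{k+1:n_t,k+1:n_t}-\widetilde A^{(k)}_{k+1:n_t,k}D_k^{-1}\widetilde A^{(k)}_{k,k+1:n_t}$. Blocks are defined by a strictly increasing list $[1=\mathcal{I}_1<\dots<\mathcal{I}_{n_t+1}=n+1]$ and the blocks of $\widetilde A^{(k)}$ are indexed $k,\dots,n_t$. $\|X\|_{\max}=\max_{i,j}|X[i,j]|$. *)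

From HB Require Import structures.
From mathcomp Require Import all_boot all_order all_algebra.
From mathcomp Require Import reals.
Set Implicit Arguments. Unset Strict Implicit. Unset Printing Implicit Defensive.
Import Order.TTheory GRing.Theory Num.Theory.
Local Open Scope ring_scope.

(* Conventions: indices are 0-based.  An n x n matrix (and every
   intermediate matrix A~(k) of the algorithm) is represented as a function
   nat -> nat -> R; only the entries with row/column index in the relevant
   range are meaningful.  The blocking [1 = I_1 < ... < I_{nt+1} = n+1] of
   the paper becomes a function I : nat -> nat with I 0 = 0, I nt = n, and
   block k (0-based, k < nt) is the index range [I k, I (k+1)). *)

Definition zielke {R : realType} (n : nat) (i j : nat) : R :=
  if ((i < n) && (j < n))%N then
    if (i <= n - 2)%N && (i < j)%N then 1
    else if ((i == n.-1) && (j == 0))%N then -1 else 0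
  else 0.

Definition maxnorm_from {R : realType} (lo n : nat) (A : nat -> nat -> R) : R :=
  \big[Num.max/0]_(lo <= i < n) \big[Num.max/0]_(lo <= j < n) `|A i j|.

Definition diag_block {R : realType} (I : nat -> nat) (k : nat)
  (A : nat -> nat -> R) : 'M[R]_(I k.+1 - I k) :=
  \matrix_(a, b) A (I k + a)%N (I k + b)%N.

Definition thresh {R : realType} (tau : R) m (s : 'rV[R]_m) : 'rV[R]_m :=
  \row_a (if s 0 a <= tau then tau else s 0 a).

(* One BEAM step at block k: A' is A~(k+1) computed from A = A~(k) using
   SOME singular value decomposition  A_kk = U diag(s) V^T  (U, V
   orthogonal, s >= 0), with D_k = U diag(thresh s) V^T. *)
Definition beam_step {R : realType} (tau : R) (n : nat) (I : nat -> nat)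
  (k : nat) (A A' : nat -> nat -> R) : Prop :=
  exists (U V : 'M[R]_(I k.+1 - I k)) (s : 'rV[R]_(I k.+1 - I k)),
    [/\ U^T *m U = 1%:M, V^T *m V = 1%:M,
        (forall a, 0 <= s 0 a),
        diag_block I k A = U *m diag_mx s *m V^T &
        let Dinv := invmx (U *m diag_mx (thresh tau s) *m V^T) in
        forall i j, A' i j =
          A i j - \sum_(a < I k.+1 - I k) \sum_(b < I k.+1 - I k)
                    A i (I k + a)%N * Dinv a b * A (I k + b)%N j].

(* A run of the BEAM factorization on Z: A 0 = Z and A (k+1) is obtained
   from A k by a BEAM step, for every k < nt.  (A k) is A~(k+1) of the
   paper, whose meaningful part is indexed by [I k, n). *)
Definition beam_run {R : realType} (tau : R) (n nt : nat) (I : nat -> nat)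
  (A : nat -> nat -> nat -> R) : Prop :=
  (forall i j, A 0%N i j = zielke n i j) /\
  (forall k, (k < nt)%N -> beam_step tau n I k (A k) (A k.+1)).

Definition growth {R : realType} (n nt : nat) (I : nat -> nat)
  (A : nat -> nat -> nat -> R) : R :=
  (\big[Num.max/0]_(k < nt) maxnorm_from (I k) n (A k)) /
    maxnorm_from 0 n (zielke n).

From HB Require Import structures.
From mathcomp Require Import all_boot all_order all_algebra.
From mathcomp Require Import reals.
From mathcomp Require Import ring lra zify.
Import Order.TTheory GRing.Theory Num.Theory.
Local Open Scope ring_scope.

(* Every diagonal block met by the factorization is the strictly upper
   triangular all-ones matrix N.  Its nonzero singular values exceed 1/2 (a
   discrete Hardy inequality), so the threshold only lifts the single zero
   singular value, whose singular vectors are e_0 and +-e_last.  Hence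
   D = N +- tau e_last e_0^T and D^-1 1 = beta e_0 + e_last with
   |beta| = 1/tau.  The Schur complement therefore keeps the upper rows of
   the trailing matrix in the same all-ones pattern and multiplies its last
   (constant) row by -beta, so ||A~(k)||_max = tau^(1-k), and the growth
   factor is attained at the last step. *)

Section Sums.
Context {R : realType}.
Implicit Types (F f g w : nat -> R).

Lemma tail_sums_sqr_identity (W : nat -> R) (m : nat) :
  4 * \sum_(0 <= k < m.+1) W k ^+ 2 - \sum_(0 <= k < m) (W k - W k.+1) ^+ 2
   - 2 * W m ^+ 2
  = 2 * W 0%N ^+ 2 + \sum_(0 <= k < m) (W k + W k.+1) ^+ 2.
Proof.
elim: m => [|m IH]; first by rewrite big_nat1 !big_geq //; ring.
rewrite big_nat_recr //= [in X in _ - X - _]big_nat_recr //=.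
by rewrite [in RHS]big_nat_recr //= addrA -IH; ring.
Qed.

Lemma psumr_nat_eq0 [F] [a b : nat] :
  (forall k, 0 <= F k) -> \sum_(a <= k < b) F k = 0 ->
  forall k, (a <= k < b)%N -> F k = 0.
Proof.
move=> F_ge0 /eqP; rewrite psumr_eq0 // => /allP F0 k kab.
by apply/eqP/F0; rewrite mem_index_iota.
Qed.

(* Equality case of the discrete Hardy inequality
   [sum_b f b ^ 2 <= 4 sum_r (sum_(b > r) f b) ^ 2] for [f 0 = 0]: it shows
   that the nonzero singular values of [upper_ones] exceed 1/2. *)
Lemma tail_sums_small_eq0 [m : nat] [f : nat -> R] :
  f 0%N = 0 ->
  4 * \sum_(0 <= r < m) (\sum_(r.+1 <= b < m) f b) ^+ 2 <=
     \sum_(0 <= b < m) f b ^+ 2 ->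
  forall b, (b < m)%N -> f b = 0.
Proof.
case: m => [//|m] f0 small b bm.
pose W k := \sum_(k.+1 <= b < m.+1) f b.
have fW k : (k < m)%N -> f k.+1 = W k - W k.+1.
  by move=> km; rewrite /W (big_ltn (m := k.+1)) //; ring.
have sum_fW : \sum_(0 <= b < m.+1) f b ^+ 2 =
    \sum_(0 <= k < m) (W k - W k.+1) ^+ 2.
  rewrite big_ltn // f0 expr0n add0r big_add1 /=.
  by apply: eq_big_nat => k /andP[_ km]; rewrite fW.
have := tail_sums_sqr_identity W m; rewrite [W m]big_geq // -sum_fW => E.
have pos : 0 <= \sum_(0 <= k < m) (W k + W k.+1) ^+ 2.
  by apply: sumr_ge0 => k _; exact: sqr_ge0.
have W0_ge0 := sqr_ge0 (W 0%N).
have /eqP : W 0%N ^+ 2 = 0 by nra.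
rewrite sqrf_eq0 => /eqP W0.
have sum_eq0 : \sum_(0 <= k < m) (W k + W k.+1) ^+ 2 = 0 by nra.
have Wz k : (k <= m)%N -> W k = 0.
  elim: k => [//|k IH km].
  have /eqP := psumr_nat_eq0 (fun k => sqr_ge0 (W k + W k.+1)) sum_eq0 _ km.
  by rewrite sqrf_eq0 IH ?(ltnW km) // add0r => /eqP.
case: b bm => [//|b] bm.
by rewrite fW // !Wz // ?subr0 // ltnW.
Qed.

Lemma sum_ord_gt (m r : nat) g :
  \sum_(b < m) ((r < b)%N)%:R * g b = \sum_(r.+1 <= b < m) g b.
Proof.
rewrite -(big_mkord xpredT (fun b => ((r < b)%N)%:R * g b)).
case: (leqP r.+1 m) => rm.
  rewrite (big_cat_nat _ (n := r.+1)) //= big1_seq ?add0r.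
    by apply: eq_big_nat => b /andP[rb _]; rewrite rb mul1r.
  move=> b /andP[_]; rewrite mem_index_iota => /andP[_ br].
  by rewrite ltnNge -ltnS br mul0r.
rewrite [RHS]big_geq ?(ltnW rm) // big1_seq // => b /andP[_].
rewrite mem_index_iota => /andP[_ bm].
by rewrite ltnNge (leq_trans (ltnW bm) _) ?mul0r // -ltnS.
Qed.

Lemma sum_ord_lt (m b : nat) g : (b <= m)%N ->
  \sum_(r < m) ((r < b)%N)%:R * g r = \sum_(0 <= r < b) g r.
Proof.
move=> bm; rewrite -(big_mkord xpredT (fun r => ((r < b)%N)%:R * g r)).
rewrite (big_cat_nat _ (n := b)) //= [X in _ + X]big1_seq ?addr0.
  by apply: eq_big_nat => r /andP[_ rb]; rewrite rb mul1r.
move=> r /andP[_]; rewrite mem_index_iota => /andP[br _].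
by rewrite ltnNge br mul0r.
Qed.

Lemma tail_sums_eq0 [m : nat] [f : nat -> R] :
  (forall r, (r < m)%N -> \sum_(r.+1 <= b < m) f b = 0) ->
  forall b, (0 < b < m)%N -> f b = 0.
Proof.
move=> H [|b] // /andP[_ bm].
by have := H b (ltnW bm); rewrite (big_ltn (m := b.+1)) // H // addr0.
Qed.

Lemma prefix_sums_eq0 [m : nat] [w : nat -> R] :
  (forall b, (b < m)%N -> \sum_(0 <= r < b) w r = 0) ->
  forall r, (r.+1 < m)%N -> w r = 0.
Proof.
move=> H r rm.
by have := H r.+1 rm; rewrite big_nat_recr //= H ?add0r // ltnW.
Qed.

Lemma sum_ord_nat_eq [m c : nat] (F : nat -> R) : (c < m)%N ->
  \sum_(a < m) F a * ((a == c :> nat))%:R = F c.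
Proof.
move=> cm; rewrite (bigD1 (Ordinal cm)) //= eqxx mulr1 big1 ?addr0 // => a.
by rewrite -val_eqE /= => /negPf ->; rewrite mulr0.
Qed.

End Sums.

Definition upper_ones {R : realType} (m : nat) : 'M[R]_m :=
  \matrix_(a, b) ((a < b)%N)%:R.

Lemma upper_onesE {R : realType} (m : nat) (a b : 'I_m) :
  upper_ones m a b = ((a < b)%N)%:R :> R.
Proof. exact: mxE. Qed.

Lemma orthogonal_col_norm {R : realType} {m : nat} [Q : 'M[R]_m] :
  Q^T *m Q = 1%:M -> forall i, \sum_r Q r i ^+ 2 = 1.
Proof.
move=> QtQ i; transitivity ((Q^T *m Q) i i); last by rewrite QtQ mxE eqxx.
by rewrite mxE; apply: eq_bigr => r _; rewrite mxE expr2.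
Qed.

Lemma svd_mxE {R : realType} (m : nat) (U V : 'M[R]_m) (s : 'rV[R]_m) a b :
  (U *m diag_mx s *m V^T) a b = \sum_i U a i * s 0 i * V b i.
Proof. by rewrite mxE; apply: eq_bigr => i _; rewrite mul_mx_diag !mxE. Qed.

Lemma thresh_gt0 {R : realType} (m : nat) (tau : R) (s : 'rV[R]_m) i :
  0 < tau -> 0 < (thresh tau s) 0 i.
Proof.
move=> tau_gt0; rewrite mxE; case: ifP => // /negbT.
by rewrite -ltNge; exact: lt_trans.
Qed.

Lemma thresh_svd_unit {R : realType} [m : nat] [tau : R]
    [U V : 'M[R]_m] (s : 'rV[R]_m) :
  0 < tau -> U^T *m U = 1%:M -> V^T *m V = 1%:M ->
  U *m diag_mx (thresh tau s) *m V^T \in unitmx.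
Proof.
move=> tau_gt0 /mulmx1_unit[_ U_unit] /mulmx1_unit[Vt_unit _].
rewrite !unitmx_mul U_unit Vt_unit andbT /= unitmxE det_diag unitfE.
by rewrite gt_eqF // prodr_gt0 // => i _; exact: thresh_gt0.
Qed.

Section ThresholdedSVD.
Context {R : realType} {m : nat} {tau : R}.
Context {U V : 'M[R]_m.+2} {s : 'rV[R]_m.+2}.
Hypotheses (tau_gt0 : 0 < tau) (tau_le_half : tau <= 1 / 2).
Hypotheses (UtU : U^T *m U = 1%:M) (VtV : V^T *m V = 1%:M).
Hypothesis s_ge0 : forall a, 0 <= s 0 a.
Hypothesis svd_upper_ones : U *m diag_mx s *m V^T = upper_ones m.+2.

Lemma sing_mulV0 i : s 0 i * V ord0 i = 0.
Proof.
have : U^T *m upper_ones m.+2 = diag_mx s *m V^T.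
  by rewrite -svd_upper_ones !mulmxA UtU mul1mx.
move=> /matrixP/(_ i ord0); rewrite mul_diag_mx !mxE => <-.
by rewrite big1 // => r _; rewrite upper_onesE ltn0 mulr0.
Qed.

Lemma tail_sums_V i (r : nat) : (r < m.+2)%N ->
  \sum_(r.+1 <= b < m.+2) V (inord b) i = U (inord r) i * s 0 i.
Proof.
move=> rm; have : upper_ones m.+2 *m V = U *m diag_mx s.
  by rewrite -svd_upper_ones -mulmxA VtV mulmx1.
move=> /matrixP/(_ (inord r) i); rewrite mul_mx_diag !mxE => <-.
rewrite -sum_ord_gt; apply: eq_bigr => b _.
by rewrite upper_onesE inordK // inord_val.
Qed.

Lemma small_sing_eq0 [i] : s 0 i <= tau -> s 0 i = 0.
Proof.
move=> s_le_tau; apply/eqP/negPn/negP => s_neq0.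
pose f k := V (inord k) i.
have f0 : f 0%N = 0.
  have /eqP := sing_mulV0 i; rewrite mulf_eq0 (negPf s_neq0) /= => /eqP V0.
  by rewrite /f -V0; congr (V _ i); apply: val_inj; rewrite /= inordK.
have sumV2 : \sum_(0 <= b < m.+2) f b ^+ 2 = 1.
  rewrite -(orthogonal_col_norm VtV i) big_mkord.
  by apply: eq_bigr => b _; rewrite /f inord_val.
have sumU2 : \sum_(0 <= r < m.+2) U (inord r) i ^+ 2 = 1.
  rewrite -(orthogonal_col_norm UtU i) big_mkord.
  by apply: eq_bigr => r _; rewrite inord_val.
have small : 4 * \sum_(0 <= r < m.+2) (\sum_(r.+1 <= b < m.+2) f b) ^+ 2 <=
    \sum_(0 <= b < m.+2) f b ^+ 2.
  rewrite (eq_big_nat _ _ (F2 := fun r => U (inord r) i ^+ 2 * s 0 i ^+ 2));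
    last by move=> r /andP[_ rm]; rewrite tail_sums_V // exprMn.
  rewrite -mulr_suml sumU2 sumV2 mul1r expr2.
  have := ler_pM (s_ge0 i) (s_ge0 i) s_le_tau s_le_tau.
  have := ler_pM (ltW tau_gt0) (ltW tau_gt0) tau_le_half tau_le_half.
  lra.
suff : \sum_(0 <= b < m.+2) f b ^+ 2 = 0.
  by rewrite sumV2 => /eqP; rewrite oner_eq0.
rewrite big_nat big1 // => b /andP[_ bm].
by rewrite (tail_sums_small_eq0 f0 small) // expr0n.
Qed.

Lemma sing_eq0_V [i b] : s 0 i = 0 -> b != ord0 -> V b i = 0.
Proof.
move=> s0 b_neq0.
have tails0 r : (r < m.+2)%N -> \sum_(r.+1 <= b < m.+2) V (inord b) i = 0.
  by move=> rm; rewrite tail_sums_V // s0 mulr0.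
have b_gt0 : (0 < b < m.+2)%N by rewrite lt0n ltn_ord andbT.
by have := tail_sums_eq0 tails0 _ b_gt0; rewrite inord_val.
Qed.

Lemma thresh_sub_mulV i b :
  ((thresh tau s) 0 i - s 0 i) * V b i = tau * (b == ord0)%:R * V ord0 i.
Proof.
rewrite mxE; case: ifP => [s_le_tau | /negbT]; last first.
  rewrite -ltNge subrr mul0r => tau_lt_s.
  have /eqP := sing_mulV0 i; rewrite mulf_eq0 gt_eqF ?(lt_trans tau_gt0) //=.
  by move=> /eqP ->; rewrite mulr0.
have s0 := small_sing_eq0 s_le_tau; rewrite s0 subr0.
have [-> | b_neq0] := eqVneq b ord0; first by rewrite mulr1.
by rewrite sing_eq0_V // !mulr0 mul0r.
Qed.

Lemma UVt_col0 : exists2 sg : R, `|sg| = 1 &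
  forall r, (U *m V^T) r ord0 = sg * (r == ord_max)%:R.
Proof.
set X := U *m V^T.
have XtX : X^T *m X = 1%:M.
  by rewrite trmx_mul trmxK !mulmxA -(mulmxA V) UtU mulmx1 mulmx1C.
have NtX : (upper_ones m.+2)^T *m X = V *m diag_mx s *m V^T.
  by rewrite -svd_upper_ones !trmx_mul trmxK tr_diag_mx !mulmxA
    -(mulmxA (V *m diag_mx s)) UtU mulmx1.
have prefix0 b : (b < m.+2)%N -> \sum_(0 <= r < b) X (inord r) ord0 = 0.
  move=> bm; rewrite -(@sum_ord_lt _ _ b (fun r => X (inord r) ord0) (ltnW bm)).
  transitivity (((upper_ones m.+2)^T *m X) (inord b) ord0).
    rewrite mxE; apply: eq_bigr => r _.
    by rewrite [_^T _ _]mxE upper_onesE inordK // inord_val.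
  by rewrite NtX svd_mxE big1 // => i _; rewrite -mulrA sing_mulV0 mulr0.
have X0 r : r != ord_max -> X r ord0 = 0.
  rewrite -val_eqE /= => r_neq; have rm : (r.+1 < m.+2)%N.
    by have := ltn_ord r; lia.
  by have := prefix_sums_eq0 prefix0 _ rm; rewrite inord_val.
have X_last : X ord_max ord0 ^+ 2 = 1.
  rewrite -(orthogonal_col_norm XtX ord0) (bigD1 ord_max) //= big1 ?addr0 //.
  by move=> r /X0 ->; rewrite expr0n.
exists (X ord_max ord0).
  by apply/eqP; rewrite -sqr_norm_eq1 X_last.
move=> r; have [-> | /X0 ->] := eqVneq r ord_max; first by rewrite mulr1.
by rewrite mulr0.
Qed.

Lemma thresh_svd_upper_ones : exists2 sg : R, `|sg| = 1 &
  U *m diag_mx (thresh tau s) *m V^T =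
  upper_ones m.+2 + (tau * sg) *: delta_mx ord_max ord0.
Proof.
have [sg sg1 col0] := UVt_col0; exists sg => //; apply/matrixP => a b.
transitivity ((U *m diag_mx s *m V^T) a b +
    \sum_i U a i * (((thresh tau s) 0 i - s 0 i) * V b i)).
  by rewrite !svd_mxE -big_split /=; apply: eq_bigr => i _; ring.
rewrite svd_upper_ones [in RHS]mxE; congr (_ + _).
under eq_bigr do rewrite thresh_sub_mulV.
transitivity (tau * (b == ord0)%:R * (U *m V^T) a ord0).
  by rewrite [in RHS]mxE mulr_sumr; apply: eq_bigr => i _; rewrite mxE; ring.
by rewrite col0 !mxE -mulnb natrM; ring.
Qed.

Lemma thresh_svd_inv_rowsum : exists2 beta : R, `|beta| = tau^-1 &
  invmx (U *m diag_mx (thresh tau s) *m V^T) *m const_mx 1 =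
  beta *: delta_mx ord0 0 + delta_mx ord_max 0 :> 'cV_m.+2.
Proof.
have := thresh_svd_unit s tau_gt0 UtU VtV.
have [sg sg1 ->] := thresh_svd_upper_ones; set D := _ + _ => D_unit.
have sg_neq0 : sg != 0 by rewrite -normr_eq0 sg1 oner_eq0.
have c_neq0 : tau * sg != 0 by rewrite mulf_neq0 // gt_eqF.
exists (tau * sg)^-1.
  by rewrite normrV ?unitfE // normrM sg1 mulr1 gtr0_norm.
set y := _ + _; suff Dy : D *m y = const_mx 1 by rewrite -Dy mulKmx.
rewrite /D /y mulmxDl !mulmxDr -!scalemxAl -!scalemxAr mul_delta_mx.
rewrite mul_delta_mx_0 // scaler0 addr0 -!colE scalerA mulfV // scale1r.
apply/matrixP => r j; rewrite !mxE (ord1 j) eqxx andbT /= mulr0 add0r.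
have [-> | ] := eqVneq r ord_max; first by rewrite ltnn add0r.
rewrite -val_eqE /= addr0 => r_neq.
suff -> : (r < m.+1)%N by [].
by have := ltn_ord r; lia.
Qed.

End ThresholdedSVD.

Lemma beam_block_rowsum {R : realType} [m : nat] [tau : R]
    [U V : 'M[R]_m] [s : 'rV[R]_m] :
  (1 < m)%N -> 0 < tau -> tau <= 1 / 2 ->
  U^T *m U = 1%:M -> V^T *m V = 1%:M -> (forall a, 0 <= s 0 a) ->
  U *m diag_mx s *m V^T = upper_ones m ->
  exists2 beta : R, `|beta| = tau^-1 & forall a : 'I_m,
    \sum_b invmx (U *m diag_mx (thresh tau s) *m V^T) a b =
    beta * (a == 0 :> nat)%:R + (a == m.-1 :> nat)%:R.
Proof.
case: m U V s => [|[|m]] // U V s _ tau_gt0 tau_le UtU VtV s_ge0 svd.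
have [beta beta_abs inv1] :=
  thresh_svd_inv_rowsum tau_gt0 tau_le UtU VtV s_ge0 svd.
exists beta => // a; move/matrixP/(_ a 0): inv1.
rewrite !mxE !eqxx !andbT -!val_eqE /= => <-.
by apply: eq_bigr => b _; rewrite mxE mulr1.
Qed.

Definition upper_ones_rows {R : realType} (lo n : nat) (A : nat -> nat -> R) :=
  forall i j, (lo <= i < n.-1)%N -> (lo <= j < n)%N -> A i j = ((i < j)%N)%:R.

Section BeamStep.
Context {R : realType} {tau : R} {n : nat} {I : nat -> nat} {k : nat}.
Context {A A' : nat -> nat -> R}.
Hypotheses (tau_gt0 : 0 < tau) (tau_le_half : tau <= 1 / 2).
Hypotheses (block_ge2 : (I k + 2 <= I k.+1)%N) (block_lt : (I k.+1 < n)%N).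
Hypothesis upper : upper_ones_rows (I k) n A.
Hypothesis step : beam_step tau n I k A A'.

Lemma beam_step_update : exists2 beta : R, `|beta| = tau^-1 &
  forall i j, (I k.+1 <= j < n)%N ->
  A' i j = A i j - beta * A i (I k) - A i (I k.+1).-1.
Proof.
have [U [V [s [UtU VtV s_ge0 svd update]]]] := step.
have diag : U *m diag_mx s *m V^T = upper_ones (I k.+1 - I k).
  rewrite -svd; apply/matrixP => a b; rewrite !mxE upper ?ltn_add2l //;
  by have := ltn_ord a; have := ltn_ord b; lia.
have [|beta beta_abs rowsum] :=
  beam_block_rowsum _ tau_gt0 tau_le_half UtU VtV s_ge0 diag; first lia.
exists beta => // i j j_range.
transitivity (A i j - \sum_(a < I k.+1 - I k) A i (I k + a)%N *
    (beta * (a == 0 :> nat)%:R + (a == (I k.+1 - I k).-1 :> nat)%:R)).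
  rewrite update; congr (_ - _); apply: eq_bigr => a _.
  rewrite -rowsum mulr_sumr; apply: eq_bigr => b _.
  have b_lt := ltn_ord b.
  rewrite [A (I k + b)%N j]upper; [|lia..].
  by rewrite (_ : (I k + b < j)%N) ?mulr1 //; lia.
under eq_bigr do rewrite mulrDr mulrA.
rewrite big_split /= (sum_ord_nat_eq (fun a => A i (I k + a)%N * beta));
  last lia.
rewrite (sum_ord_nat_eq (fun a => A i (I k + a)%N)); last lia.
by rewrite addn0 (_ : (I k + (I k.+1 - I k).-1)%N = (I k.+1).-1); [ring | lia].
Qed.

Lemma beam_step_upper_ones_rows : upper_ones_rows (I k.+1) n A'.
Proof.
have [beta _ update] := beam_step_update.
move=> i j i_range j_range; rewrite update // !upper; [|lia..].
have -> : (i < I k)%N = false by lia.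
have -> : (i < (I k.+1).-1)%N = false by lia.
by rewrite mulr0 !subr0.
Qed.

End BeamStep.

Lemma zielke_upper_ones_rows {R : realType} (n : nat) :
  upper_ones_rows 0 n (@zielke R n).
Proof.
move=> i j /andP[_ i_lt] /andP[_ j_lt].
rewrite /zielke j_lt (_ : (i < n)%N) /=; last lia.
rewrite (_ : (i <= n - 2)%N) /=; last lia.
by case: (i < j)%N; rewrite //= ltn_eqF.
Qed.

Lemma zielke_last_row {R : realType} (n j : nat) : (2 <= n)%N -> (j < n)%N ->
  @zielke R n n.-1 j = - (j == 0)%N%:R.
Proof.
move=> n2 j_lt; rewrite /zielke j_lt (_ : (n.-1 < n)%N) /=; last lia.
rewrite (_ : (n.-1 <= n - 2)%N = false) /=; last lia.
by rewrite eqxx /=; case: (j == 0)%N; rewrite ?oppr0.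
Qed.

Lemma bigmax_nat_le {R : realType} (lo hi : nat) (F : nat -> R) (M : R) :
  0 <= M -> (forall i, (lo <= i < hi)%N -> F i <= M) ->
  \big[Num.max/0]_(lo <= i < hi) F i <= M.
Proof.
move=> M_ge0 F_le; rewrite big_seq; apply: bigmax_le => // i.
by rewrite mem_index_iota; exact: F_le.
Qed.

Lemma le_bigmax_nat_at {R : realType} [lo hi i : nat] (F : nat -> R) :
  (lo <= i < hi)%N -> F i <= \big[Num.max/0]_(lo <= i < hi) F i.
Proof. by move=> i_range; apply: le_bigmax_seq; rewrite ?mem_index_iota. Qed.

Lemma maxnorm_from_upper_ones_rows {R : realType} (lo n : nat)
    (A : nat -> nat -> R) (M : R) :
  upper_ones_rows lo n A -> 1 <= M ->
  (forall j, (lo <= j < n)%N -> `|A n.-1 j| <= M) ->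
  (exists2 j, (lo <= j < n)%N & `|A n.-1 j| = M) ->
  maxnorm_from lo n A = M.
Proof.
move=> upper M_ge1 last_le [j0 j0_range A_j0].
have M_ge0 : 0 <= M by exact: le_trans M_ge1.
apply/le_anti/andP; split.
  apply: bigmax_nat_le => // i i_range; apply: bigmax_nat_le => // j j_range.
  have [i_lt | i_ge] := ltnP i n.-1; last first.
    by rewrite (_ : i = n.-1); [exact: last_le | lia].
  rewrite upper; [|lia|lia].
  by case: (i < j)%N; rewrite ?normr1 ?normr0.
have last_range : (lo <= n.-1 < n)%N by lia.
rewrite -A_j0; apply: le_trans (le_bigmax_nat_at _ last_range).
exact: (le_bigmax_nat_at (fun j => `|A n.-1 j|)).
Qed.

Lemma zielke_maxnorm {R : realType} [n : nat] : (2 <= n)%N ->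
  maxnorm_from 0 n (@zielke R n) = 1.
Proof.
move=> n2; apply: maxnorm_from_upper_ones_rows => //.
- exact: zielke_upper_ones_rows.
- move=> j /andP[_ j_lt]; rewrite zielke_last_row // normrN.
  by case: (j == 0)%N; rewrite ?normr1 ?normr0.
- by exists 0%N; rewrite ?zielke_last_row ?normrN ?normr1 //; lia.
Qed.

Lemma blocking_room [I : nat -> nat] [n nt : nat] :
  I nt = n -> (forall k, (k < nt)%N -> (I k + 2 <= I k.+1)%N) ->
  forall k, (k < nt)%N -> (I k + 2 <= n)%N.
Proof.
move=> Int blocks.
have spread d k : (k + d <= nt)%N -> (I k + 2 * d <= I (k + d))%N.
  elim: d => [|d IH] k_le; first by rewrite muln0 !addn0.
  by have := blocks (k + d)%N; rewrite -addnS; lia.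
move=> k k_lt; have := spread (nt - k)%N k; rewrite subnKC ?Int; lia.
Qed.

Section BeamRun.
Context {R : realType} {tau : R} {n nt : nat} {I : nat -> nat}.
Context {A : nat -> nat -> nat -> R}.
Hypotheses (n_ge2 : (2 <= n)%N) (I0 : I 0%N = 0%N) (Int : I nt = n).
Hypothesis blocks : forall k, (k < nt)%N -> (I k + 2 <= I k.+1)%N.
Hypotheses (tau_gt0 : 0 < tau) (tau_le_half : tau <= 1 / 2).
Hypothesis run : beam_run tau n nt I A.

Lemma beam_run_shape [k] : (k < nt)%N ->
  upper_ones_rows (I k) n (A k) /\
  ((0 < k)%N -> exists2 c : R, `|c| = tau ^- k &
     forall j, (I k <= j < n)%N -> A k n.-1 j = c).
Proof.
have [A0 step] := run.
elim: k => [_|k IH k_lt].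
  by split=> // i j i_range j_range; rewrite A0 zielke_upper_ones_rows // -I0.
have {IH} [upper last] := IH (ltnW k_lt).
have block := blocks k (ltnW k_lt).
have block_lt : (I k.+1 < n)%N by have := blocking_room Int blocks _ k_lt; lia.
have step_k := step k (ltnW k_lt).
have [beta beta_abs update] :=
  beam_step_update tau_gt0 tau_le_half block block_lt upper step_k.
split=> [|_].
  exact: (beam_step_upper_ones_rows tau_gt0 tau_le_half block block_lt upper).
case: k => [|k] in k_lt upper last update block block_lt step_k *.
  exists beta; first by rewrite expr1.
  have Z_last a : (a < n)%N -> A 0%N n.-1 a = - (a == 0)%N%:R.
    by move=> a_lt; rewrite A0 zielke_last_row.
  move=> j j_range; rewrite update // !Z_last; [|lia..].
  rewrite I0 eqxx (_ : (j == 0)%N = false); last lia.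
  by rewrite (_ : ((I 1).-1 == 0)%N = false) /=; [ring | lia].
have [//|c c_abs c_row] := last.
exists (- (beta * c)).
  by rewrite normrN normrM beta_abs c_abs -!exprVn [RHS]exprS.
by move=> j j_range; rewrite update // !c_row; [ring | lia..].
Qed.

Lemma beam_run_maxnorm [k] : (k < nt)%N ->
  maxnorm_from (I k) n (A k) = tau ^- k.
Proof.
move=> k_lt; have [upper last] := beam_run_shape k_lt.
have [A0 _] := run.
case: k => [|k] in k_lt upper last *.
  rewrite I0 expr0 invr1 -(zielke_maxnorm (R := R) n_ge2).
  by apply: eq_bigr => i _; apply: eq_bigr => j _; rewrite A0.
have [//|c c_abs c_row] := last.
have room := blocking_room Int blocks _ k_lt.
apply: maxnorm_from_upper_ones_rows => //.
- rewrite -exprVn exprn_ege1 // invf_ge1 //.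
  have := tau_le_half; lra.
- by move=> j j_range; rewrite c_row // c_abs.
- by exists n.-1; rewrite ?c_row //; lia.
Qed.

End BeamRun.

Lemma bigmax_ord_nondecreasing {R : realType} [nt : nat] (F : nat -> R) :
  (0 < nt)%N -> (forall k, 0 <= F k) ->
  {homo F : a b / (a <= b)%N >-> a <= b} ->
  \big[Num.max/0]_(k < nt) F k = F nt.-1.
Proof.
case: nt => // nt _ F_ge0 F_homo; apply/le_anti/andP; split.
  by apply: bigmax_le => // k _; apply: F_homo; rewrite -ltnS.
exact: (le_bigmax 0 (fun k : 'I_nt.+1 => F k) ord_max).
Qed.

Theorem theorem3p3 (R : realType) (n nt : nat) (I : nat -> nat) (tau : R)
  (A : nat -> nat -> nat -> R) :
  (2 <= n)%N ->
  I 0%N = 0%N -> I nt = n ->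
  (forall k, (k < nt)%N -> (I k + 2 <= I k.+1)%N) ->
  0 < tau -> tau <= 1 / 2 ->
  beam_run tau n nt I A ->
  growth n nt I A = tau ^- (nt - 1).
Proof.
move=> n_ge2 I0 Int blocks tau_gt0 tau_le_half run.
have nt_gt0 : (0 < nt)%N.
  by rewrite lt0n; apply/eqP => nt0; move: n_ge2; rewrite -Int nt0 I0.
rewrite /growth zielke_maxnorm // divr1 subn1.
rewrite (eq_bigr (fun k : 'I_nt => tau ^- k)) => [|k _]; last first.
  exact: (beam_run_maxnorm n_ge2 I0 Int blocks tau_gt0 tau_le_half run).
have tauV_gt1 : 1 < tau^-1 by rewrite invf_gt1 //; lra.
apply: (bigmax_ord_nondecreasing (fun k => tau ^- k)) => // [k | a b ab].
  by rewrite -exprVn exprn_ge0 // ltW // (lt_trans _ tauV_gt1).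
by rewrite -!exprVn ler_eXn2l.
Qed.
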